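(* Let $C(c_0)$ be the vector space of all continuous maps $f\colon c_0\to c_0$ (over $\mathbb{R}$), endowed with the linear topology of uniform convergence on bounded subsets of $c_0$. Let $\mathscr{K}(c_0)\subseteq C(c_0)$ be the set of all $f\in C(c_0)$ for which there is no nonempty open interval $I\subseteq\mathbb{R}$ and no differentiable map $u\colon I\to c_0$ with $u'(t)=f(u(t))$ for all $t\in I$. Then $\mathscr{K}(c_0)$ is $\mathfrak{c}$-spaceable in $C(c_0)$; that is, there is a closed linear subspace $V$ of $C(c_0)$ with $\dim V=\mathfrak{c}$ and $V\subseteq \mathscr{K}(c_0)\cup\{0\}$.
   Context: $c_0$ denotes the Banach space of real null sequences with the sup norm. $\mathfrak{c}$ denotes the cardinality of the continuum. For a cardinal $\mu$ and a subset $A$ of a topological vector space $E$, $A$ is called $\mu$-spaceable if $A\cup\{0\}$ contains a closed linear subspace of $E$ of (algebraic) dimension $\mu$. *)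

From Stdlib Require Import Reals Lra List.
Open Scope R_scope.

Definition c0 : Type := {x : nat -> R | Un_cv x 0}.
Definition c0seq (x : c0) : nat -> R := proj1_sig x.
Coercion c0seq : c0 >-> Funclass.

Lemma cv_const (a : R) : Un_cv (fun _ : nat => a) a.
Proof.
  intros eps He; exists 0%nat; intros n _; unfold R_dist.
  rewrite Rminus_diag_eq, Rabs_R0 by reflexivity; exact He.
Qed.

Lemma c0_zero_cv : Un_cv (fun _ : nat => 0) 0.
Proof. apply cv_const. Qed.

Lemma c0_add_cv (x y : c0) : Un_cv (fun n => x n + y n) 0.
Proof.
  pose proof (CV_plus _ _ _ _ (proj2_sig x) (proj2_sig y)) as H.
  rewrite Rplus_0_r in H; exact H.
Qed.

Lemma c0_scale_cv (a : R) (x : c0) : Un_cv (fun n => a * x n) 0.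
Proof.
  pose proof (CV_mult _ _ _ _ (cv_const a) (proj2_sig x)) as H.
  rewrite Rmult_0_r in H; exact H.
Qed.

Definition c0_zero : c0 := exist _ (fun _ => 0) c0_zero_cv.
Definition c0_add (x y : c0) : c0 := exist _ (fun n => x n + y n) (c0_add_cv x y).
Definition c0_scale (a : R) (x : c0) : c0 := exist _ (fun n => a * x n) (c0_scale_cv a x).

Definition c0map : Type := c0 -> c0.
Definition mzero : c0map := fun _ => c0_zero.
Definition madd (f g : c0map) : c0map := fun x => c0_add (f x) (g x).
Definition mscale (a : R) (f : c0map) : c0map := fun x => c0_scale a (f x).

(** Continuity of f : c_0 -> c_0 w.r.t. the sup norm
    (||y - x|| <= delta  written as  forall n, |y n - x n| <= delta). *)
Definition cont (f : c0map) : Prop :=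
  forall (x : c0) (eps : R), eps > 0 ->
    exists delta, delta > 0 /\
      forall y : c0, (forall n, Rabs (y n - x n) <= delta) ->
        forall n, Rabs (f y n - f x n) <= eps.

(** u : I -> c_0 (I = (a,b)) is differentiable with u'(t) = f(u(t)) on I,
    the derivative being taken in the norm of c_0. *)
Definition is_solution (f : c0map) (a b : R) (u : R -> c0) : Prop :=
  forall t, a < t < b ->
    forall eps, eps > 0 ->
      exists delta, delta > 0 /\
        forall s, a < s < b -> 0 < Rabs (s - t) < delta ->
          forall n, Rabs ((u s n - u t n) / (s - t) - f (u t) n) <= eps.

Definition Kset (f : c0map) : Prop :=
  cont f /\ ~ (exists (a b : R) (u : R -> c0), a < b /\ is_solution f a b u).

(** Closedness of V in C(c_0) for the topology of uniform convergence on
    bounded sets (every bounded set lies in a ball of radius r). *)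
Definition closed_ub (V : c0map -> Prop) : Prop :=
  forall f, cont f ->
    (forall r eps : R, eps > 0 ->
       exists g, V g /\
         forall x : c0, (forall n, Rabs (x n) <= r) ->
           forall n, Rabs (f x n - g x n) <= eps) ->
    V f.

(** Finite linear combinations of a family b indexed by R:
    the list contains (coefficient, index) pairs. *)
Definition lincomb (b : R -> c0map) (l : list (R * R)) : c0map :=
  fold_right (fun p acc => madd (mscale (fst p) (b (snd p))) acc) mzero l.

Definition lin_indep (b : R -> c0map) : Prop :=
  forall l : list (R * R), NoDup (List.map snd l) ->
    lincomb b l = mzero -> Forall (fun p => fst p = 0) l.

Definition linear_subspace (V : c0map -> Prop) : Prop :=
  (forall f, V f -> cont f) /\ V mzero /\
  (forall f g, V f -> V g -> V (madd f g)) /\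
  (forall a f, V f -> V (mscale a f)).

(** V has a Hamel basis in bijection with R, i.e. dim V = continuum. *)
Definition dim_continuum (V : c0map -> Prop) : Prop :=
  exists b : R -> c0map,
    (forall r, V (b r)) /\ lin_indep b /\
    (forall f, V f -> exists l, NoDup (List.map snd l) /\ f = lincomb b l).

From Stdlib Require Import Reals Lra Lia List Classical ProofIrrelevance FunctionalExtensionality.
Open Scope R_scope.

(* The maps are diagonal: [x |-> (beta n * psi n (x n))_n] with [beta] bounded and
   [psi n y = sqrt |y| + 1/(n+1) + n max(0, |y| - 1/2)].  Since [psi n y -> 0] as
   [y -> 0] and [n -> oo], such a map sends [c_0] continuously to itself.  If
   [beta n = a <> 0] for infinitely many [n], there is no local solution: the
   coordinate [v = u n] obeys [|v'| >= |a| sqrt |v|] with [v'] of constant sign,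
   which forces [|v|] above a size independent of [n] at an end of any time
   interval, while [u(t)] is a null sequence.  The same coordinates and the term
   [n max(0, |y| - 1/2)] make the map unbounded on the unit ball.
   V is the span of the diagonal maps whose [beta] are the indicators of an almost
   disjoint family of subsets of N indexed by R (the branches of the dyadic tree).
   Every nonzero coefficient sequence of V takes a nonzero value infinitely often,
   so V \ {0} consists of maps without solutions, the generators are linearly
   independent, and V is closed because two maps of V at finite distance on the
   unit ball coincide. *)

Lemma c0_ext (x y : c0) : (forall n, x n = y n) -> x = y.
Proof.
  destruct x as [x hx], y as [y hy]; simpl; intros H.
  assert (x = y) by (apply functional_extensionality; exact H). subst.
  f_equal; apply proof_irrelevance.
Qed.

Lemma c0map_ext (f g : c0map) : (forall x n, f x n = g x n) -> f = g.
Proof. intros H; apply functional_extensionality; intro x; apply c0_ext, H. Qed.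

Lemma INR_unbounded (A : R) : exists N : nat, A < INR N.
Proof. destruct (INR_archimed 1 A) as [N HN]; [lra|]. exists N; lra. Qed.

Lemma c0_small (x : c0) (eps : R) : eps > 0 ->
  exists N, forall n, (N <= n)%nat -> Rabs (x n) < eps.
Proof.
  intros He. destruct (proj2_sig x eps He) as [N HN]. exists N; intros n Hn.
  specialize (HN n Hn). unfold R_dist in HN. rewrite Rminus_0_r in HN. exact HN.
Qed.

Lemma seq_bounded_upto (x : nat -> R) (N : nat) :
  exists M, forall n, (n < N)%nat -> Rabs (x n) <= M.
Proof.
  induction N as [|N [M HM]].
  - exists 0; intros; lia.
  - exists (Rmax M (Rabs (x N))); intros n Hn.
    destruct (Nat.eq_dec n N) as [->|]; [apply Rmax_r|].
    eapply Rle_trans; [apply HM; lia|apply Rmax_l].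
Qed.

Lemma c0_bounded (x : c0) : exists r, forall n, Rabs (x n) <= r.
Proof.
  destruct (c0_small x 1) as [N HN]; [lra|].
  destruct (seq_bounded_upto x N) as [M HM].
  exists (Rmax M 1); intros n.
  destruct (Nat.lt_ge_cases n N).
  - eapply Rle_trans; [apply HM; lia|apply Rmax_l].
  - specialize (HN n ltac:(lia)). eapply Rle_trans; [|apply Rmax_r]; lra.
Qed.

Lemma Un_cv_bounded_mult (beta u : nat -> R) (B : R) :
  (forall n, Rabs (beta n) <= B) -> Un_cv u 0 -> Un_cv (fun n => beta n * u n) 0.
Proof.
  intros HB Hu eps He.
  assert (HB' : 0 < Rabs B + 1) by (pose proof (Rabs_pos B); lra).
  destruct (Hu (eps / (Rabs B + 1))) as [N HN]; [apply Rdiv_lt_0_compat; lra|].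
  exists N; intros n Hn. specialize (HN n Hn). unfold R_dist in *.
  rewrite Rminus_0_r in *. rewrite Rabs_mult.
  assert (Rabs (beta n) <= Rabs B + 1) by (specialize (HB n); pose proof (Rle_abs B); lra).
  assert (eps = (Rabs B + 1) * (eps / (Rabs B + 1))) by (field; lra).
  pose proof (Rabs_pos (beta n)). pose proof (Rabs_pos (u n)). nra.
Qed.

Lemma Rabs_sqrt_sub_le (a b : R) : 0 <= a -> 0 <= b ->
  Rabs (sqrt a - sqrt b) <= sqrt (Rabs (a - b)).
Proof.
  assert (K : forall a b, 0 <= b <= a -> sqrt a - sqrt b <= sqrt (a - b)).
  { intros a0 b0 [H0 H1].
    pose proof (sqrt_sqrt b0 H0). pose proof (sqrt_sqrt (a0 - b0) ltac:(lra)).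
    pose proof (sqrt_pos b0); pose proof (sqrt_pos (a0 - b0)).
    assert (sqrt a0 <= sqrt b0 + sqrt (a0 - b0)); [|lra].
    rewrite <- (sqrt_Rsqr (sqrt b0 + sqrt (a0 - b0))) by lra.
    apply sqrt_le_1_alt. unfold Rsqr. nra. }
  intros Ha Hb. destruct (Rle_dec b a).
  - assert (sqrt b <= sqrt a) by (apply sqrt_le_1_alt; lra).
    rewrite (Rabs_right (a - b)), Rabs_right by lra. apply K; lra.
  - assert (sqrt a <= sqrt b) by (apply sqrt_le_1_alt; lra).
    rewrite (Rabs_left (a - b)), Rabs_left1 by lra.
    replace (- (sqrt a - sqrt b)) with (sqrt b - sqrt a) by ring.
    replace (- (a - b)) with (b - a) by ring. apply K; lra.
Qed.

Lemma sqrt_lt_of_lt_sqr (e y : R) : 0 < e -> 0 <= y -> y < e * e -> sqrt y < e.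
Proof.
  intros He Hy0 Hy. rewrite <- (sqrt_square e) by lra. apply sqrt_lt_1_alt; lra.
Qed.

(** * The profile psi *)

Definition psi (n : nat) (y : R) : R :=
  sqrt (Rabs y) + / (INR n + 1) + INR n * Rmax 0 (Rabs y - / 2).

Lemma inv_INR_succ_pos (n : nat) : 0 < / (INR n + 1).
Proof. apply Rinv_0_lt_compat; pose proof (pos_INR n); lra. Qed.

Lemma psi_ge (n : nat) (y : R) : sqrt (Rabs y) + / (INR n + 1) <= psi n y.
Proof.
  unfold psi. pose proof (pos_INR n). pose proof (Rmax_l 0 (Rabs y - / 2)).
  assert (0 <= INR n * Rmax 0 (Rabs y - / 2)) by (apply Rmult_le_pos; lra). lra.
Qed.

Lemma psi_pos (n : nat) (y : R) : 0 < psi n y.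
Proof.
  pose proof (psi_ge n y). pose proof (sqrt_pos (Rabs y)).
  pose proof (inv_INR_succ_pos n). lra.
Qed.

Lemma psi_one_ge (n : nat) : INR n / 2 <= psi n 1.
Proof.
  unfold psi. rewrite Rabs_R1, sqrt_1, Rmax_right by lra.
  pose proof (pos_INR n). pose proof (inv_INR_succ_pos n). lra.
Qed.

Lemma psi_small (n : nat) (y : R) : Rabs y <= / 2 ->
  psi n y = sqrt (Rabs y) + / (INR n + 1).
Proof. intros Hy. unfold psi. rewrite Rmax_left by lra. ring. Qed.

Lemma inv_INR_succ_small (e : R) : 0 < e ->
  exists N : nat, forall n, (N <= n)%nat -> / (INR n + 1) < e.
Proof.
  intros He. destruct (INR_unbounded (/ e)) as [N HN]. exists N; intros n Hn.
  apply le_INR in Hn. pose proof (pos_INR N).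
  rewrite <- (Rinv_inv e). apply Rinv_lt_contravar.
  - apply Rmult_lt_0_compat; [apply Rinv_0_lt_compat|]; lra.
  - lra.
Qed.

Lemma psi_null (x : c0) : Un_cv (fun n => psi n (x n)) 0.
Proof.
  intros eps He.
  destruct (c0_small x (Rmin (/ 4) (eps / 2 * (eps / 2)))) as [N1 HN1].
  { apply Rmin_pos; nra. }
  destruct (inv_INR_succ_small (eps / 2)) as [N2 HN2]; [lra|].
  exists (max N1 N2); intros n Hn. unfold R_dist. rewrite Rminus_0_r.
  specialize (HN1 n ltac:(lia)). specialize (HN2 n ltac:(lia)).
  pose proof (Rmin_l (/ 4) (eps / 2 * (eps / 2))).
  pose proof (Rmin_r (/ 4) (eps / 2 * (eps / 2))).
  assert (sqrt (Rabs (x n)) < eps / 2) by (apply sqrt_lt_of_lt_sqr; [lra|apply Rabs_pos|lra]).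
  rewrite Rabs_right by (apply Rle_ge, Rlt_le, psi_pos).
  rewrite psi_small by lra. lra.
Qed.

Lemma Rmax_excess_lip (x y : R) :
  Rabs (Rmax 0 (Rabs y - / 2) - Rmax 0 (Rabs x - / 2)) <= Rabs (y - x).
Proof.
  pose proof (Rabs_triang_inv y x). pose proof (Rabs_triang_inv x y).
  rewrite Rabs_minus_sym in H0. pose proof (Rabs_pos (y - x)).
  unfold Rmax; destruct (Rle_dec 0 _), (Rle_dec 0 _); apply Rabs_le; split; lra.
Qed.

Lemma psi_equicont (x : c0) (eps : R) : eps > 0 ->
  exists delta, delta > 0 /\
    forall y : c0, (forall n, Rabs (y n - x n) <= delta) ->
      forall n, Rabs (psi n (y n) - psi n (x n)) <= eps.
Proof.
  intros He. set (e := eps / 2).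
  destruct (c0_small x (/ 4)) as [N HN]; [lra|].
  assert (HN0 : 0 < INR N + 1) by (pose proof (pos_INR N); lra).
  set (d := Rmin (/ 4) (Rmin (e * e) (e / (INR N + 1)))).
  assert (Hd1 : d <= / 4) by apply Rmin_l.
  assert (Hd2 : d <= e * e) by (eapply Rle_trans; [apply Rmin_r|apply Rmin_l]).
  assert (Hd3 : d * (INR N + 1) <= e).
  { assert (d <= e / (INR N + 1)) by (eapply Rle_trans; [apply Rmin_r|apply Rmin_r]).
    apply (Rmult_le_compat_r (INR N + 1)) in H; [|lra].
    unfold Rdiv in H. rewrite Rmult_assoc, Rinv_l, Rmult_1_r in H by lra. exact H. }
  exists d; split.
  { unfold d, e; apply Rmin_pos; [lra|apply Rmin_pos; [nra|apply Rdiv_lt_0_compat; lra]]. }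
  intros y Hy n. specialize (Hy n).
  assert (Hsqrt : Rabs (sqrt (Rabs (y n)) - sqrt (Rabs (x n))) <= e).
  { eapply Rle_trans; [apply Rabs_sqrt_sub_le; apply Rabs_pos|].
    rewrite <- (sqrt_square e) by (unfold e; lra). apply sqrt_le_1_alt.
    pose proof (Rabs_triang_inv (y n) (x n)). pose proof (Rabs_triang_inv (x n) (y n)).
    rewrite Rabs_minus_sym in H0. apply Rabs_le; lra. }
  assert (Hexcess : Rabs (INR n * Rmax 0 (Rabs (y n) - / 2)
                          - INR n * Rmax 0 (Rabs (x n) - / 2)) <= e).
  { destruct (Nat.lt_ge_cases n N) as [Hn|Hn].
    - rewrite <- Rmult_minus_distr_l, Rabs_mult, Rabs_right by (apply Rle_ge, pos_INR).
      pose proof (Rmax_excess_lip (x n) (y n)). apply lt_INR in Hn.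
      pose proof (pos_INR n).
      pose proof (Rabs_pos (Rmax 0 (Rabs (y n) - / 2) - Rmax 0 (Rabs (x n) - / 2))).
      nra.
    - specialize (HN n Hn). pose proof (Rabs_triang_inv (y n) (x n)).
      rewrite (Rmax_left 0 (Rabs (y n) - / 2)), (Rmax_left 0 (Rabs (x n) - / 2)) by lra.
      rewrite Rminus_diag_eq, Rabs_R0 by reflexivity. unfold e; lra. }
  unfold psi.
  replace (_ - _) with ((sqrt (Rabs (y n)) - sqrt (Rabs (x n))) +
      (INR n * Rmax 0 (Rabs (y n) - / 2) - INR n * Rmax 0 (Rabs (x n) - / 2))) by ring.
  eapply Rle_trans; [apply Rabs_triang|unfold e in *; lra].
Qed.

(** * A scalar differential inequality *)

Lemma strict_incr_of_pos_deriv (v d : R -> R) (p q : R) :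
  (forall s, p <= s <= q -> derivable_pt_lim v s (d s)) ->
  (forall s, p <= s <= q -> 0 < d s) ->
  forall s t, p <= s -> s < t -> t <= q -> v s < v t.
Proof.
  intros Hder Hd s t Hs Hst Ht.
  destruct (MVT_cor2 v d s t Hst) as [c [Hc1 Hc2]].
  - intros c Hc; apply Hder; lra.
  - pose proof (Hd c ltac:(lra)). nra.
Qed.

(* [(sqrt v)' = v' / (2 sqrt v) >= k / 2]. *)
Lemma sqrt_growth (v d : R -> R) (a b k : R) : a < b ->
  (forall s, a <= s <= b -> derivable_pt_lim v s (d s)) ->
  (forall s, a <= s <= b -> 0 < v s /\ k * sqrt (v s) <= d s) ->
  k * (b - a) / 2 <= sqrt (v b).
Proof.
  intros Hab Hder Hd.
  destruct (MVT_cor2 (comp sqrt v) (fun c => / (2 * sqrt (v c)) * d c) a b Hab)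
    as [c [Hc1 Hc2]].
  { intros c Hc. apply derivable_pt_lim_comp; [apply Hder; exact Hc|].
    apply derivable_pt_lim_sqrt, Hd; exact Hc. }
  unfold comp in Hc1. destruct (Hd c ltac:(lra)) as [Hvc Hkc].
  assert (Hsc : 0 < sqrt (v c)) by (apply sqrt_lt_R0; exact Hvc).
  assert (Hrate : k / 2 <= / (2 * sqrt (v c)) * d c).
  { apply Rmult_le_reg_l with (2 * sqrt (v c)); [lra|].
    rewrite <- Rmult_assoc, Rinv_r, Rmult_1_l by lra. lra. }
  pose proof (sqrt_pos (v a)).
  assert (k / 2 * (b - a) <= / (2 * sqrt (v c)) * d c * (b - a))
    by (apply Rmult_le_compat_r; lra).
  lra.
Qed.

Lemma ode_escape_right (v d : R -> R) (p q k : R) : p < q -> 0 < k ->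
  (forall s, p <= s <= q -> derivable_pt_lim v s (d s)) ->
  (forall s, p <= s <= q -> k * sqrt (Rabs (v s)) <= d s /\ 0 < d s) ->
  0 <= v ((p + q) / 2) -> (k * (q - p) / 8) ^ 2 <= v q.
Proof.
  intros Hpq Hk Hder Hd Hm.
  set (m := (p + 3 * q) / 4).
  assert (Hincr := strict_incr_of_pos_deriv v d p q Hder (fun s Hs => proj2 (Hd s Hs))).
  assert (Hpos : forall s, m <= s <= q -> 0 < v s).
  { intros s Hs. pose proof (Hincr ((p + q) / 2) s ltac:(lra) ltac:(unfold m in Hs; lra)
      ltac:(lra)). lra. }
  assert (Hgrowth : k * (q - m) / 2 <= sqrt (v q)).
  { apply (sqrt_growth v d); [unfold m; lra| |].
    - intros s Hs; apply Hder; unfold m in Hs; lra.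
    - intros s Hs. split; [apply Hpos; exact Hs|].
      rewrite <- (Rabs_right (v s)) by (apply Rle_ge, Rlt_le, Hpos; exact Hs).
      apply Hd; unfold m in Hs; lra. }
  assert (Hq : 0 < v q) by (apply Hpos; unfold m; lra).
  rewrite <- (sqrt_sqrt (v q)) by lra. simpl. rewrite Rmult_1_r.
  assert (0 <= k * (q - p) / 8) by (apply Rmult_le_pos; [nra|lra]).
  unfold m in Hgrowth. apply Rmult_le_compat; lra.
Qed.

(* The reflection [s |-> - v (p + q - s)] exchanges the two ends of [p, q]. *)
Lemma ode_escape (v d : R -> R) (p q k : R) : p < q -> 0 < k ->
  (forall s, p <= s <= q -> derivable_pt_lim v s (d s)) ->
  (forall s, p <= s <= q -> k * sqrt (Rabs (v s)) <= d s /\ 0 < d s) ->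
  (k * (q - p) / 8) ^ 2 <= Rabs (v p) \/ (k * (q - p) / 8) ^ 2 <= Rabs (v q).
Proof.
  intros Hpq Hk Hder Hd.
  destruct (Rle_dec 0 (v ((p + q) / 2))) as [Hm|Hm].
  - right. eapply Rle_trans; [apply (ode_escape_right v d); assumption|apply Rle_abs].
  - left.
    set (w := fun s => - v (p + q - s)).
    assert (Hw : (k * (q - p) / 8) ^ 2 <= w q).
    { apply (ode_escape_right w (fun s => d (p + q - s))); try assumption.
      - intros s Hs. unfold w.
        replace (d (p + q - s)) with (- (d (p + q - s) * -1)) by ring.
        apply derivable_pt_lim_opp with (f := fun s => v (p + q - s)).
        apply (derivable_pt_lim_comp (fun s => p + q - s) v).
        + replace (-1) with (0 - 1) by ring.
          apply derivable_pt_lim_minus; [apply derivable_pt_lim_const|apply derivable_pt_lim_id].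
        + apply Hder; lra.
      - intros s Hs. unfold w. rewrite Rabs_Ropp. apply Hd; lra.
      - unfold w. replace (p + q - (p + q) / 2) with ((p + q) / 2) by field. lra. }
    unfold w in Hw. replace (p + q - q) with p in Hw by ring.
    eapply Rle_trans; [exact Hw|]. rewrite <- Rabs_Ropp. apply Rle_abs.
Qed.

Lemma psi_ode_escape (n : nat) (a : R) (v : R -> R) (p q : R) : a <> 0 -> p < q ->
  (forall s, p <= s <= q -> derivable_pt_lim v s (a * psi n (v s))) ->
  (Rabs a * (q - p) / 8) ^ 2 <= Rabs (v p) \/ (Rabs a * (q - p) / 8) ^ 2 <= Rabs (v q).
Proof.
  intros Ha Hpq Hder.
  assert (Hpa : 0 < Rabs a) by (apply Rabs_pos_lt; exact Ha).
  assert (Hbound : forall s, Rabs a * sqrt (Rabs (v s)) <= Rabs a * psi n (v s)).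
  { intros s. pose proof (psi_ge n (v s)). pose proof (inv_INR_succ_pos n). nra. }
  destruct (Rle_dec 0 a) as [Hnn|Hneg].
  - rewrite Rabs_right in * by lra.
    apply (ode_escape v (fun s => a * psi n (v s))); try assumption.
    intros s _. split; [apply Hbound|]. pose proof (psi_pos n (v s)). nra.
  - rewrite Rabs_left in * by lra. rewrite <- (Rabs_Ropp (v p)), <- (Rabs_Ropp (v q)).
    apply (ode_escape (opp_fct v) (fun s => - (a * psi n (v s)))); try assumption.
    + intros s Hs. apply derivable_pt_lim_opp, Hder, Hs.
    + intros s _. unfold opp_fct. rewrite Rabs_Ropp.
      split; [specialize (Hbound s); lra|]. pose proof (psi_pos n (v s)). nra.
Qed.

(** * Almost disjoint branches of the dyadic tree *)

Definition squash (r : R) : R := / 2 + r / (2 * (1 + Rabs r)).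

Lemma squash_range (r : R) : 0 < squash r < 1.
Proof.
  unfold squash. pose proof (Rabs_pos r).
  assert (Rabs (r / (2 * (1 + Rabs r))) < / 2); [|apply Rabs_def2 in H0; lra].
  unfold Rdiv; rewrite Rabs_mult, Rabs_inv, (Rabs_right (2 * _)) by lra.
  apply Rmult_lt_reg_r with (2 * (1 + Rabs r)); [lra|].
  rewrite Rmult_assoc, Rinv_l by lra. lra.
Qed.

Lemma squash_inj (r s : R) : squash r = squash s -> r = s.
Proof.
  unfold squash; intros H. pose proof (Rabs_pos r); pose proof (Rabs_pos s).
  assert (E : r * (1 + Rabs s) = s * (1 + Rabs r)).
  { assert (Hq : r / (2 * (1 + Rabs r)) = s / (2 * (1 + Rabs s))) by lra.
    apply (f_equal (fun t => t * (2 * (1 + Rabs r) * (1 + Rabs s)))) in Hq.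
    field_simplify in Hq; lra. }
  destruct (Rle_dec 0 r), (Rle_dec 0 s);
    [rewrite (Rabs_right r), (Rabs_right s) in E
    |rewrite (Rabs_right r), (Rabs_left s) in E
    |rewrite (Rabs_left r), (Rabs_right s) in E
    |rewrite (Rabs_left r), (Rabs_left s) in E]; nra.
Qed.

(* Node [(k, m)] of the dyadic tree is the interval [[m / 2^k, (m + 1) / 2^k)],
   numbered [2 ^ k + m]; [branch_ind r] indicates the nodes containing [squash r]. *)
Definition on_branch (r : R) (k m : nat) : Prop :=
  INR m <= 2 ^ k * squash r < INR m + 1.

Definition branch_ind (r : R) (n : nat) : R :=
  let k := Nat.log2 n in let m := (n - 2 ^ k)%nat in
  if Rle_dec (INR m) (2 ^ k * squash r) then
    if Rlt_dec (2 ^ k * squash r) (INR m + 1) then 1 else 0 else 0.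

Lemma branch_ind_bound (r : R) (n : nat) : Rabs (branch_ind r n) <= 1.
Proof.
  unfold branch_ind; destruct Rle_dec; [destruct Rlt_dec|];
    rewrite ?Rabs_R1, ?Rabs_R0; lra.
Qed.

Lemma on_branch_lt (r : R) (k m : nat) : on_branch r k m -> (m < 2 ^ k)%nat.
Proof.
  intros [H1 H2]. pose proof (squash_range r). pose proof (pow_lt 2 k ltac:(lra)).
  apply INR_lt. rewrite pow_INR. replace (INR 2) with 2 by (simpl; lra). nra.
Qed.

Lemma branch_ind_node (r : R) (k m : nat) : (m < 2 ^ k)%nat ->
  branch_ind r (2 ^ k + m) =
  if Rle_dec (INR m) (2 ^ k * squash r) then
    if Rlt_dec (2 ^ k * squash r) (INR m + 1) then 1 else 0 else 0.
Proof.
  intros H. unfold branch_ind.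
  replace (Nat.log2 (2 ^ k + m)) with k
    by (symmetry; apply Nat.log2_unique; [lia|rewrite Nat.pow_succ_r'; lia]).
  replace (2 ^ k + m - 2 ^ k)%nat with m by lia. reflexivity.
Qed.

Lemma branch_ind_on (r : R) (k m : nat) : on_branch r k m -> branch_ind r (2 ^ k + m) = 1.
Proof.
  intros Hc. rewrite branch_ind_node by (eapply on_branch_lt; eauto). destruct Hc.
  destruct Rle_dec; [destruct Rlt_dec|]; lra.
Qed.

Lemma branch_ind_off (r : R) (k m : nat) : (m < 2 ^ k)%nat -> ~ on_branch r k m ->
  branch_ind r (2 ^ k + m) = 0.
Proof.
  intros H Hc. rewrite branch_ind_node by exact H.
  destruct Rle_dec; [destruct Rlt_dec|]; try reflexivity.
  exfalso; apply Hc; split; lra.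
Qed.

Lemma on_branch_exists (r : R) (k : nat) : exists m, on_branch r k m.
Proof.
  set (x := 2 ^ k * squash r).
  destruct (INR_unbounded x) as [N HN].
  induction N as [|N IH].
  - pose proof (squash_range r). pose proof (pow_lt 2 k ltac:(lra)).
    unfold x in HN; simpl in HN; nra.
  - destruct (Rle_dec (INR N) x) as [HNx|HNx].
    + exists N; split; [exact HNx|]. rewrite S_INR in HN; exact HN.
    + apply IH; lra.
Qed.

Lemma pow2_unbounded (A : R) : exists K : nat, forall k, (K <= k)%nat -> A < 2 ^ k.
Proof.
  destruct (INR_unbounded A) as [K HK]. exists K; intros k Hk.
  apply le_INR in Hk. pose proof (poly k 1 ltac:(lra)).
  replace (1 + 1) with 2 in H by ring. lra.
Qed.

Lemma on_branch_eventually_disjoint (r s : R) : r <> s ->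
  exists K, forall k, (K <= k)%nat -> forall m, on_branch r k m -> ~ on_branch s k m.
Proof.
  intros Hrs.
  assert (Hd : 0 < Rabs (squash r - squash s))
    by (apply Rabs_pos_lt; intro; apply Hrs, squash_inj; lra).
  destruct (pow2_unbounded (/ Rabs (squash r - squash s))) as [K HK].
  exists K; intros k Hk m [H1 H2] [H3 H4].
  specialize (HK k Hk). pose proof (pow_lt 2 k ltac:(lra)).
  assert (Hlt : Rabs (2 ^ k * (squash r - squash s)) < 1) by (apply Rabs_def1; lra).
  rewrite Rabs_mult, (Rabs_right (2 ^ k)) in Hlt by lra.
  apply (Rmult_lt_compat_r (Rabs (squash r - squash s))) in HK; [|exact Hd].
  rewrite Rinv_l in HK by lra. lra.
Qed.

Definition inf_often (P : nat -> Prop) : Prop := forall N, exists n, (N <= n)%nat /\ P n.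

Definition basis_map (r : R) : c0map := fun x =>
  exist _ (fun n => branch_ind r n * psi n (x n))
    (Un_cv_bounded_mult (branch_ind r) _ 1 (branch_ind_bound r) (psi_null x)).

Definition coeff_seq (l : list (R * R)) (n : nat) : R :=
  fold_right (fun p acc => fst p * branch_ind (snd p) n + acc) 0 l.

Lemma lincomb_basis_map (l : list (R * R)) (x : c0) (n : nat) :
  lincomb basis_map l x n = coeff_seq l n * psi n (x n).
Proof. induction l as [|p l IH]; simpl; [ring|unfold c0seq in *; simpl; rewrite IH; ring]. Qed.

Lemma coeff_seq_app (l1 l2 : list (R * R)) (n : nat) :
  coeff_seq (l1 ++ l2) n = coeff_seq l1 n + coeff_seq l2 n.
Proof. induction l1 as [|p l1 IH]; simpl; [ring|rewrite IH; ring]. Qed.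

Lemma coeff_seq_scale (a : R) (l : list (R * R)) (n : nat) :
  coeff_seq (map (fun p => (a * fst p, snd p)) l) n = a * coeff_seq l n.
Proof. induction l as [|p l IH]; simpl; [ring|rewrite IH; ring]. Qed.

Lemma coeff_seq_bound (l : list (R * R)) : exists B, forall n, Rabs (coeff_seq l n) <= B.
Proof.
  induction l as [|p l [B HB]]; simpl.
  - exists 0; intros; rewrite Rabs_R0; lra.
  - exists (Rabs (fst p) + B); intros n.
    eapply Rle_trans; [apply Rabs_triang|]. rewrite Rabs_mult.
    pose proof (branch_ind_bound (snd p) n). pose proof (Rabs_pos (fst p)).
    pose proof (Rabs_pos (branch_ind (snd p) n)). specialize (HB n). nra.
Qed.

Lemma coeff_seq_zero (l : list (R * R)) (n : nat) :
  Forall (fun p => fst p = 0) l -> coeff_seq l n = 0.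
Proof. induction 1 as [|p l Hp _ IH]; simpl; [reflexivity|rewrite Hp, IH; ring]. Qed.

Definition drop_index (r : R) (l : list (R * R)) : list (R * R) :=
  filter (fun p => if Req_EM_T (snd p) r then false else true) l.

Definition coeff_at (r : R) (l : list (R * R)) : R :=
  fold_right (fun p acc => (if Req_EM_T (snd p) r then fst p else 0) + acc) 0 l.

Lemma coeff_seq_split (r : R) (l : list (R * R)) (n : nat) :
  coeff_seq l n = coeff_at r l * branch_ind r n + coeff_seq (drop_index r l) n.
Proof.
  induction l as [|p l IH]; simpl; [ring|].
  destruct (Req_EM_T (snd p) r) as [e|e]; simpl; rewrite IH; [rewrite e|]; ring.
Qed.

Lemma In_drop_index (r : R) (l : list (R * R)) (p : R * R) :
  In p (drop_index r l) -> snd p <> r /\ In p l.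
Proof.
  unfold drop_index; rewrite filter_In. intros [H1 H2]; split; [|exact H1].
  destruct (Req_EM_T (snd p) r); [discriminate|assumption].
Qed.

Lemma drop_index_length (r : R) (l : list (R * R)) :
  (length (drop_index r l) <= length l)%nat.
Proof. unfold drop_index. induction l; simpl; [lia|destruct (Req_EM_T _ _); simpl; lia]. Qed.

Lemma coeff_seq_nodup (l : list (R * R)) :
  exists l', NoDup (map snd l') /\ incl (map snd l') (map snd l) /\
    forall n, coeff_seq l' n = coeff_seq l n.
Proof.
  remember (length l) as N. assert (HN : (length l <= N)%nat) by lia. clear HeqN.
  revert l HN; induction N as [|N IH]; intros [|[a r] l] HN; simpl in HN;
    try (exists nil; split; [constructor|split; [intros ? []|reflexivity]]); [lia|].
  destruct (IH (drop_index r l)) as [l' [Hnd [Hincl Heq]]].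
  { pose proof (drop_index_length r l); lia. }
  assert (Hidx : forall s, In s (map snd l') -> s <> r /\ In s (map snd l)).
  { intros s Hs. destruct (proj1 (in_map_iff _ _ _) (Hincl s Hs)) as [p [<- Hp]].
    apply In_drop_index in Hp. split; [tauto|apply in_map; tauto]. }
  exists ((a + coeff_at r l, r) :: l'). simpl. split; [|split].
  - constructor; [|exact Hnd]. intros Hin. apply (Hidx r Hin). reflexivity.
  - intros s [<-|Hs]; [left; reflexivity|right; apply Hidx, Hs].
  - intros n. rewrite Heq, (coeff_seq_split r l n). ring.
Qed.

Lemma coeff_at_notin (r : R) (l : list (R * R)) : ~ In r (map snd l) -> coeff_at r l = 0.
Proof.
  induction l as [|p l IH]; simpl; intros H; [reflexivity|].
  destruct (Req_EM_T (snd p) r); [tauto|rewrite IH by tauto; ring].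
Qed.

Lemma coeff_at_nodup (l : list (R * R)) (p : R * R) :
  NoDup (map snd l) -> In p l -> coeff_at (snd p) l = fst p.
Proof.
  induction l as [|q l IH]; simpl; intros Hnd Hin; [contradiction|].
  inversion Hnd as [|? ? Hq Hl]; subst.
  destruct Hin as [->|Hin].
  - destruct (Req_EM_T (snd p) (snd p)); [|congruence].
    rewrite coeff_at_notin by exact Hq. ring.
  - destruct (Req_EM_T (snd q) (snd p)) as [e|e].
    + exfalso; apply Hq. rewrite e. apply in_map; exact Hin.
    + rewrite IH by assumption. ring.
Qed.

Lemma coeff_seq_off_branch (r : R) (l : list (R * R)) :
  (forall p, In p l -> snd p <> r) ->
  exists K, forall k, (K <= k)%nat -> forall m, on_branch r k m -> coeff_seq l (2 ^ k + m) = 0.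
Proof.
  induction l as [|p l IH]; intros H.
  - exists 0%nat; intros; reflexivity.
  - destruct IH as [K2 HK2]; [intros q Hq; apply H; right; exact Hq|].
    destruct (on_branch_eventually_disjoint r (snd p)) as [K1 HK1].
    { intro e; apply (H p); [left; reflexivity|symmetry; exact e]. }
    exists (max K1 K2); intros k Hk m Hon. simpl.
    rewrite (branch_ind_off (snd p) k m (on_branch_lt _ _ _ Hon) (HK1 k ltac:(lia) m Hon)).
    rewrite (HK2 k ltac:(lia) m Hon). ring.
Qed.

(* Along the branch of [r], the other branches eventually stop contributing. *)
Lemma coeff_seq_inf_often (r : R) (l : list (R * R)) :
  inf_often (fun n => coeff_seq l n = coeff_at r l).
Proof.
  intros N. destruct (coeff_seq_off_branch r (drop_index r l)) as [K HK].
  { intros p Hp; apply In_drop_index in Hp; tauto. }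
  set (k := max K N). destruct (on_branch_exists r k) as [m Hm].
  exists (2 ^ k + m)%nat; split.
  - pose proof (Nat.pow_gt_lin_r 2 k ltac:(lia)). lia.
  - rewrite (coeff_seq_split r l), (branch_ind_on r k m Hm), (HK k ltac:(lia) m Hm). ring.
Qed.

Lemma lincomb_basis_map_nonzero (l : list (R * R)) : lincomb basis_map l <> mzero ->
  exists a, a <> 0 /\ inf_often (fun n => coeff_seq l n = a).
Proof.
  intros Hnz. destruct (coeff_seq_nodup l) as [l' [Hnd [_ Heq]]].
  destruct (classic (Exists (fun p => fst p <> 0) l')) as [Hex|Hno].
  - apply Exists_exists in Hex. destruct Hex as [p [Hp Ha]].
    exists (fst p); split; [exact Ha|]. intros N.
    destruct (coeff_seq_inf_often (snd p) l' N) as [n [Hn Hc]].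
    exists n; split; [exact Hn|]. rewrite <- Heq, Hc. apply coeff_at_nodup; assumption.
  - exfalso; apply Hnz. apply c0map_ext; intros x n.
    rewrite lincomb_basis_map, <- Heq, coeff_seq_zero; [simpl; ring|].
    apply Forall_forall; intros p Hp. apply NNPP; intro Ha.
    apply Hno, Exists_exists; exists p; tauto.
Qed.

(** * Diagonal maps *)

Lemma c0_unit_cv (k : nat) : Un_cv (fun j => if Nat.eq_dec j k then 1 else 0) 0.
Proof.
  intros eps He. exists (S k); intros n Hn. destruct (Nat.eq_dec n k); [lia|].
  unfold R_dist; rewrite Rminus_0_r, Rabs_R0; lra.
Qed.

Definition c0_unit (k : nat) : c0 := exist (fun x => Un_cv x 0) _ (c0_unit_cv k).

Lemma is_solution_coord (f : c0map) (a0 b0 : R) (u : R -> c0) (n : nat) (t : R) :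
  is_solution f a0 b0 u -> a0 < t < b0 ->
  derivable_pt_lim (fun s => u s n) t (f (u t) n).
Proof.
  intros Hs Ht eps He.
  destruct (Hs t Ht (eps / 2) ltac:(lra)) as [d [Hd H]].
  assert (Hpos : 0 < Rmin d (Rmin (t - a0) (b0 - t)))
    by (apply Rmin_pos; [lra|apply Rmin_pos; lra]).
  exists (mkposreal _ Hpos). intros h Hh Hlt. simpl in Hlt.
  pose proof (Rmin_l d (Rmin (t - a0) (b0 - t))).
  pose proof (Rmin_r d (Rmin (t - a0) (b0 - t))).
  pose proof (Rmin_l (t - a0) (b0 - t)). pose proof (Rmin_r (t - a0) (b0 - t)).
  destruct (Rabs_def2 h (t - a0) ltac:(lra)). destruct (Rabs_def2 h (b0 - t) ltac:(lra)).
  assert (Hd' : 0 < Rabs (t + h - t) < d).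
  { replace (t + h - t) with h by ring. split; [apply Rabs_pos_lt; exact Hh|lra]. }
  specialize (H (t + h) ltac:(lra) Hd' n). replace (t + h - t) with h in H by ring. lra.
Qed.

Section DiagonalMap.

Variables (f : c0map) (beta : nat -> R).
Hypothesis f_diag : forall x n, f x n = beta n * psi n (x n).

Lemma diag_cont (B : R) : (forall n, Rabs (beta n) <= B) -> cont f.
Proof.
  intros HB x eps He.
  assert (HB' : 0 < Rabs B + 1) by (pose proof (Rabs_pos B); lra).
  destruct (psi_equicont x (eps / (Rabs B + 1))) as [d [Hd Hpsi]];
    [apply Rdiv_lt_0_compat; lra|].
  exists d; split; [exact Hd|]. intros y Hy n.
  rewrite !f_diag, <- Rmult_minus_distr_l, Rabs_mult.
  specialize (Hpsi y Hy n).
  assert (Rabs (beta n) <= Rabs B + 1) by (specialize (HB n); pose proof (Rle_abs B); lra).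
  assert (eps = (Rabs B + 1) * (eps / (Rabs B + 1))) by (field; lra).
  pose proof (Rabs_pos (beta n)). pose proof (Rabs_pos (psi n (y n) - psi n (x n))). nra.
Qed.

Variable a : R.
Hypothesis a_neq0 : a <> 0.
Hypothesis beta_inf_often : inf_often (fun n => beta n = a).

(* [psi n 1 >= n / 2], so the unit vectors give unbounded values. *)
Lemma diag_unbounded (M : R) :
  exists x : c0, (forall n, Rabs (x n) <= 1) /\ exists n, M < Rabs (f x n).
Proof.
  assert (Hpa : 0 < Rabs a) by (apply Rabs_pos_lt; exact a_neq0).
  destruct (INR_unbounded (2 * Rabs M / Rabs a)) as [N HN].
  destruct (beta_inf_often N) as [n [Hn Hb]].
  exists (c0_unit n); split.
  - intros j. unfold c0_unit, c0seq; simpl.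
    destruct (Nat.eq_dec j n); rewrite ?Rabs_R1, ?Rabs_R0; lra.
  - exists n. rewrite f_diag, Hb. unfold c0_unit, c0seq; simpl.
    destruct (Nat.eq_dec n n); [|congruence].
    pose proof (psi_one_ge n). apply le_INR in Hn. pose proof (pos_INR n).
    rewrite Rabs_mult, (Rabs_right (psi n 1)) by lra.
    assert (2 * Rabs M / Rabs a * Rabs a = 2 * Rabs M) by (field; lra).
    pose proof (Rle_abs M). nra.
Qed.

(* On a coordinate [n] with [beta n = a], [u n] solves [v' = a psi n v], which
   pushes [|v|] above a fixed size at an end of [[p, q]]; but [u p] and [u q] are
   null sequences. *)
Lemma diag_no_solution :
  ~ (exists (a0 b0 : R) (u : R -> c0), a0 < b0 /\ is_solution f a0 b0 u).
Proof.
  intros [a0 [b0 [u [Hab Hs]]]].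
  set (p := (3 * a0 + b0) / 4). set (q := (a0 + 3 * b0) / 4).
  assert (Hpq : p < q) by (unfold p, q; lra).
  set (eta := (Rabs a * (q - p) / 8) ^ 2).
  assert (Heta : 0 < eta).
  { apply pow_lt, Rdiv_lt_0_compat; [|lra].
    pose proof (Rabs_pos_lt a a_neq0). nra. }
  destruct (c0_small (u p) eta Heta) as [N1 HN1].
  destruct (c0_small (u q) eta Heta) as [N2 HN2].
  destruct (beta_inf_often (max N1 N2)) as [n [Hn Hb]].
  specialize (HN1 n ltac:(lia)). specialize (HN2 n ltac:(lia)).
  destruct (psi_ode_escape n a (fun s => u s n) p q a_neq0 Hpq) as [Hc|Hc];
    [|fold eta in Hc; lra..].
  intros s Hsp. rewrite <- Hb, <- f_diag.
  apply (is_solution_coord f a0 b0); [exact Hs|unfold p, q in Hsp; lra].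
Qed.

End DiagonalMap.

Lemma madd_mscale_opp (f g : c0map) (x : c0) (n : nat) :
  madd f (mscale (-1) g) x n = f x n - g x n.
Proof. unfold madd, mscale, c0_add, c0_scale, c0seq; simpl. ring. Qed.

Lemma Rabs_sub_small_eq (a b : R) : (forall eps, eps > 0 -> Rabs (a - b) <= eps) -> a = b.
Proof.
  intros H. apply NNPP; intro Hne.
  assert (Hpos : 0 < Rabs (a - b)) by (apply Rabs_pos_lt; lra).
  specialize (H (Rabs (a - b) / 2) ltac:(lra)). lra.
Qed.

(* A subspace in which no nonzero map is bounded on the unit ball is closed: the
   approximants of a limit are eventually at bounded distance from each other on
   the unit ball, hence all equal. *)
Lemma closed_ub_of_unbounded (V : c0map -> Prop) :
  (forall f g, V f -> V g -> V (madd f (mscale (-1) g))) ->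
  (forall g, V g -> g <> mzero -> forall M, exists x : c0,
     (forall n, Rabs (x n) <= 1) /\ exists n, M < Rabs (g x n)) ->
  closed_ub V.
Proof.
  intros Hsub Hunb f _ Happrox.
  destruct (Happrox 1 1 ltac:(lra)) as [g0 [Hg0 Hg0f]].
  assert (Hunique : forall g eps, V g ->
            (forall x : c0, (forall n, Rabs (x n) <= 1) ->
               forall n, Rabs (f x n - g x n) <= eps) -> g = g0).
  { intros g eps Hg Hgf. apply NNPP; intro Hne.
    assert (Hdiff : madd g (mscale (-1) g0) <> mzero).
    { intros E. apply Hne, c0map_ext; intros x n.
      pose proof (f_equal (fun h : c0map => h x n) E) as En. cbv beta in En.
      rewrite madd_mscale_opp in En. change (mzero x n) with 0 in En. lra. }
    destruct (Hunb _ (Hsub g g0 Hg Hg0) Hdiff (eps + 1)) as [x [Hx [n Hn]]].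
    rewrite madd_mscale_opp in Hn.
    specialize (Hgf x Hx n). specialize (Hg0f x Hx n).
    replace (g x n - g0 x n) with (- (f x n - g x n) + (f x n - g0 x n)) in Hn by ring.
    pose proof (Rabs_triang (- (f x n - g x n)) (f x n - g0 x n)) as Htri.
    rewrite Rabs_Ropp in Htri. lra. }
  replace f with g0; [exact Hg0|].
  apply c0map_ext; intros x n. destruct (c0_bounded x) as [r Hr].
  symmetry; apply Rabs_sub_small_eq; intros eps He.
  destruct (Happrox (Rmax r 1) eps He) as [g [Hg Hgf]].
  assert (Hg_eq : g = g0).
  { apply (Hunique g eps Hg). intros y Hy m.
    apply Hgf; intros j; eapply Rle_trans; [apply Hy|apply Rmax_r]. }
  subst g. apply Hgf; intros j; eapply Rle_trans; [apply Hr|apply Rmax_l].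
Qed.

Definition Vspan (f : c0map) : Prop := exists l, f = lincomb basis_map l.

Lemma lincomb_basis_map_ext (l l' : list (R * R)) :
  (forall n, coeff_seq l n = coeff_seq l' n) -> lincomb basis_map l = lincomb basis_map l'.
Proof. intros H. apply c0map_ext; intros x n. rewrite !lincomb_basis_map, H. reflexivity. Qed.

Lemma madd_lincomb_basis_map (l1 l2 : list (R * R)) :
  madd (lincomb basis_map l1) (lincomb basis_map l2) = lincomb basis_map (l1 ++ l2).
Proof.
  apply c0map_ext; intros x n. rewrite lincomb_basis_map, coeff_seq_app.
  unfold madd, c0_add, c0seq at 1; simpl. fold c0seq. rewrite !lincomb_basis_map. ring.
Qed.

Lemma mscale_lincomb_basis_map (a : R) (l : list (R * R)) :
  mscale a (lincomb basis_map l) = lincomb basis_map (map (fun p => (a * fst p, snd p)) l).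
Proof.
  apply c0map_ext; intros x n. rewrite lincomb_basis_map, coeff_seq_scale.
  unfold mscale, c0_scale, c0seq at 1; simpl. fold c0seq. rewrite lincomb_basis_map. ring.
Qed.

Lemma Vspan_add (f g : c0map) : Vspan f -> Vspan g -> Vspan (madd f g).
Proof. intros [l1 ->] [l2 ->]. exists (l1 ++ l2). apply madd_lincomb_basis_map. Qed.

Lemma Vspan_scale (a : R) (f : c0map) : Vspan f -> Vspan (mscale a f).
Proof. intros [l ->]. eexists. apply mscale_lincomb_basis_map. Qed.

Lemma Vspan_cont (f : c0map) : Vspan f -> cont f.
Proof.
  intros [l ->]. destruct (coeff_seq_bound l) as [B HB].
  exact (diag_cont _ _ (lincomb_basis_map l) B HB).
Qed.

Lemma Vspan_unbounded (g : c0map) : Vspan g -> g <> mzero -> forall M, exists x : c0,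
  (forall n, Rabs (x n) <= 1) /\ exists n, M < Rabs (g x n).
Proof.
  intros [l ->] Hnz. destruct (lincomb_basis_map_nonzero l Hnz) as [a [Ha Hinf]].
  exact (diag_unbounded _ _ (lincomb_basis_map l) a Ha Hinf).
Qed.

Lemma Vspan_Kset (f : c0map) : Vspan f -> f <> mzero -> Kset f.
Proof.
  intros Hf Hnz. split; [exact (Vspan_cont f Hf)|].
  destruct Hf as [l ->]. destruct (lincomb_basis_map_nonzero l Hnz) as [a [Ha Hinf]].
  exact (diag_no_solution _ _ (lincomb_basis_map l) a Ha Hinf).
Qed.

Lemma basis_map_lin_indep : lin_indep basis_map.
Proof.
  intros l Hnd Hz. apply Forall_forall; intros p Hp.
  destruct (coeff_seq_inf_often (snd p) l 0%nat) as [n [_ Hn]].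
  rewrite coeff_at_nodup in Hn by assumption.
  pose proof (f_equal (fun h : c0map => h c0_zero n) Hz) as E. cbv beta in E.
  rewrite lincomb_basis_map, Hn in E. change (mzero c0_zero n) with 0 in E.
  apply Rmult_integral in E as [E|E]; [exact E|].
  pose proof (psi_pos n (c0_zero n)). lra.
Qed.

Lemma Vspan_basis (f : c0map) : Vspan f ->
  exists l, NoDup (map snd l) /\ f = lincomb basis_map l.
Proof.
  intros [l ->]. destruct (coeff_seq_nodup l) as [l' [Hnd [_ Heq]]].
  exists l'; split; [exact Hnd|]. apply lincomb_basis_map_ext; intros n; symmetry; apply Heq.
Qed.

Theorem theorem2p1 :
  exists V : c0map -> Prop,
    linear_subspace V /\ closed_ub V /\ dim_continuum V /\
    (forall f, V f -> f <> mzero -> Kset f).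
Proof.
  exists Vspan. split; [|split; [|split]].
  - split; [exact Vspan_cont|]. split; [exists nil; reflexivity|].
    split; [exact Vspan_add|exact Vspan_scale].
  - apply closed_ub_of_unbounded; [|exact Vspan_unbounded].
    intros f g Hf Hg. apply Vspan_add, Vspan_scale; assumption.
  - exists basis_map. split; [|split; [exact basis_map_lin_indep|exact Vspan_basis]].
    intros r. exists ((1, r) :: nil).
    apply c0map_ext; intros x n. rewrite lincomb_basis_map. simpl. ring.
  - exact Vspan_Kset.
Qed.
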